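(* Let $(X,d)$ be a compact metric space and $f\colon X\to X$ continuous. If $f$ has the limit shadowing property around $CR(f)$, then $f$ has the limit shadowing property.
   Context: A limit pseudo orbit is a sequence $(x_i)_{i\ge0}$ with $\lim_i d(f(x_i),x_{i+1})=0$. $f$ has the limit shadowing property around $S\subset X$ if every limit pseudo orbit contained in $S$ admits $y\in X$ with $\lim_i d(x_i,f^i(y))=0$; $f$ has the limit shadowing property if this holds with $S=X$. $CR(f)$ is the set of chain recurrent points: $x$ such that for every $\delta>0$ there is a finite sequence $x=z_0,\dots,z_k=x$ ($k\ge1$) with $d(f(z_i),z_{i+1})\le\delta$ for $0\le i<k$. *)

From Stdlib Require Import Reals.
Open Scope R_scope.

Record MetricSpace := {
  M :> Type;
  dist : M -> M -> R;
  dist_nonneg : forall x y, 0 <= dist x y;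
  dist_eq0 : forall x y, dist x y = 0 <-> x = y;
  dist_symm : forall x y, dist x y = dist y x;
  dist_triangle : forall x y z, dist x z <= dist x y + dist y z
}.

Arguments dist {m} _ _.

Definition open_set {X : MetricSpace} (U : X -> Prop) : Prop :=
  forall x, U x -> exists eps, 0 < eps /\ forall y, dist x y < eps -> U y.

Definition compact_space (X : MetricSpace) : Prop :=
  forall (I : Type) (U : I -> X -> Prop),
    (forall i, open_set (U i)) ->
    (forall x, exists i, U i x) ->
    exists l : list I, forall x, exists i, List.In i l /\ U i x.

Definition continuous_map {X : MetricSpace} (f : X -> X) : Prop :=
  forall x eps, 0 < eps -> exists delta, 0 < delta /\
    forall y, dist x y < delta -> dist (f x) (f y) < eps.

Definition tends_to_zero (u : nat -> R) : Prop :=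
  forall eps, 0 < eps -> exists N, forall n, (n >= N)%nat -> Rabs (u n) < eps.

Definition limit_pseudo_orbit {X : MetricSpace} (f : X -> X) (x : nat -> X) : Prop :=
  tends_to_zero (fun i => dist (f (x i)) (x (S i))).

Fixpoint iter {X : Type} (f : X -> X) (n : nat) (y : X) : X :=
  match n with O => y | S k => f (iter f k y) end.

Definition limit_shadowing_around {X : MetricSpace} (f : X -> X) (S : X -> Prop) : Prop :=
  forall x : nat -> X, limit_pseudo_orbit f x -> (forall i, S (x i)) ->
    exists y : X, tends_to_zero (fun i => dist (x i) (iter f i y)).

Definition limit_shadowing {X : MetricSpace} (f : X -> X) : Prop :=
  limit_shadowing_around f (fun _ => True).

Definition chain_recurrent {X : MetricSpace} (f : X -> X) (x : X) : Prop :=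
  forall delta, 0 < delta -> exists (k : nat) (z : nat -> X),
    (k >= 1)%nat /\ z O = x /\ z k = x /\
    forall i, (i < k)%nat -> dist (f (z i)) (z (S i)) <= delta.

(* A limit pseudo orbit (x_i) accumulates only on chain recurrent points:
   near a cluster point p the orbit returns with arbitrarily small jumps, which
   closes a delta-chain from p to p.  By compactness, dist(x_i, CR(f)) -> 0, so
   one can pick z_i in CR(f) with dist(x_i, z_i) -> 0.  Uniform continuity of f
   makes (z_i) again a limit pseudo orbit; a point shadowing (z_i) in the limit
   then also shadows (x_i). *)

From Pilot Require Import Defs.
From Stdlib Require Import Reals Lra Lia Classical ClassicalEpsilon List.
Open Scope R_scope.
Local Notation dist := Defs.dist.

Lemma dist_refl (X : MetricSpace) (x : X) : dist x x = 0.
Proof. now apply dist_eq0. Qed.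

Lemma Rabs_dist (X : MetricSpace) (x y : X) : Rabs (dist x y) = dist x y.
Proof. apply Rabs_pos_eq, dist_nonneg. Qed.

Lemma dist_triangle_r (X : MetricSpace) (x y z : X) :
  dist x z <= dist x y + dist z y.
Proof. rewrite (dist_symm X z y); apply dist_triangle. Qed.

Lemma tends_to_zero_le (u w : nat -> R) :
  (forall n, Rabs (w n) <= Rabs (u n)) -> tends_to_zero u -> tends_to_zero w.
Proof.
  intros Hwu Hu eps Heps; destruct (Hu eps Heps) as [N HN].
  exists N; intros n Hn; specialize (HN n Hn); specialize (Hwu n); lra.
Qed.

Lemma tends_to_zero_plus (u v : nat -> R) :
  tends_to_zero u -> tends_to_zero v -> tends_to_zero (fun n => u n + v n).
Proof.
  intros Hu Hv eps Heps.
  destruct (Hu (eps / 2)) as [N1 HN1]; [lra|].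
  destruct (Hv (eps / 2)) as [N2 HN2]; [lra|].
  exists (Nat.max N1 N2); intros n Hn.
  specialize (HN1 n ltac:(lia)); specialize (HN2 n ltac:(lia)).
  pose proof (Rabs_triang (u n) (v n)); lra.
Qed.

Lemma tends_to_zero_shift (u : nat -> R) :
  tends_to_zero u -> tends_to_zero (fun n => u (S n)).
Proof.
  intros Hu eps Heps; destruct (Hu eps Heps) as [N HN].
  exists N; intros n Hn; apply HN; lia.
Qed.

Lemma tends_to_zero_dist_le (X : MetricSpace) (a b : nat -> X) (u : nat -> R) :
  (forall n, dist (a n) (b n) <= u n) -> tends_to_zero u ->
  tends_to_zero (fun n => dist (a n) (b n)).
Proof.
  intros Hle; apply tends_to_zero_le; intro n.
  rewrite Rabs_dist; specialize (Hle n).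
  pose proof (dist_nonneg X (a n) (b n)); rewrite Rabs_pos_eq; lra.
Qed.

Definition frequently (P : nat -> Prop) : Prop :=
  forall M, exists n, (n >= M)%nat /\ P n.

Section Compactness.

Variable X : MetricSpace.
Hypothesis compactX : compact_space X.

Lemma compact_frequently_cluster (s : nat -> X) (P : nat -> Prop) :
  frequently P -> exists p : X,
    forall r, 0 < r -> frequently (fun n => P n /\ dist p (s n) < r).
Proof.
  (* Otherwise balls avoiding all P-indices beyond some M cover X; a finite
     subcover fails at a P-index beyond every M it uses. *)
  intros HP; apply NNPP; intros Hnone.
  set (avoids := fun (p : X) (r : R) (M : nat) =>
         0 < r /\ forall n, (n >= M)%nat -> P n -> r <= dist p (s n)).
  assert (Havoid : forall p, exists r M, avoids p r M).
  { intro p; apply NNPP; intros Hp; apply Hnone; exists p; intros r Hr M.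
    apply NNPP; intros HM; apply Hp; exists r, M; split; [exact Hr|].
    intros n Hn HPn; apply Rnot_lt_le; intros Hlt; apply HM; eauto. }
  destruct (compactX (X * R * nat)%type
              (fun '(p, r, M) q => avoids p r M /\ dist p q < r))
    as [cover Hcover].
  - intros [[p r] M] q [Hav Hq]; exists (r - dist p q); split; [lra|].
    intros y Hy; split; [exact Hav|].
    pose proof (dist_triangle X p q y); lra.
  - intro q; destruct (Havoid q) as [r [M Hav]]; exists (q, r, M).
    split; [exact Hav|]; rewrite dist_refl; apply Hav.
  - destruct (HP (list_max (map snd cover))) as [n [Hn HPn]].
    destruct (Hcover (s n)) as [[[p r] M] [Hin [[_ Hfar] Hnear]]].
    assert (HM : (M <= list_max (map snd cover))%nat).
    { assert (Hall : Forall (fun k => (k <= list_max (map snd cover))%nat)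
                         (map snd cover)) by (apply list_max_le; lia).
      eapply Forall_forall in Hall; [exact Hall|].
      now apply (in_map snd) in Hin. }
    specialize (Hfar n ltac:(lia) HPn); lra.
Qed.

Variable f : X -> X.
Hypothesis contf : continuous_map f.

Lemma continuous_map_preserves_asymptotic (a b : nat -> X) :
  tends_to_zero (fun n => dist (a n) (b n)) ->
  tends_to_zero (fun n => dist (f (a n)) (f (b n))).
Proof.
  intros Hab eps Heps; apply NNPP; intros Hnot.
  assert (Hfar : frequently (fun n => eps <= dist (f (a n)) (f (b n)))).
  { intro M; apply NNPP; intros HM; apply Hnot; exists M; intros n Hn.
    rewrite Rabs_dist; apply Rnot_le_lt; intros Hle; apply HM; eauto. }
  destruct (compact_frequently_cluster a _ Hfar) as [p Hp].
  destruct (contf p (eps / 2)) as [eta [Heta Hcont]]; [lra|].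
  destruct (Hab (eta / 2)) as [N HN]; [lra|].
  destruct (Hp (eta / 2) ltac:(lra) N) as [n [Hn [Hfarn Hpa]]].
  specialize (HN n Hn); rewrite Rabs_dist in HN.
  pose proof (dist_triangle X p (a n) (b n)).
  pose proof (Hcont (a n) ltac:(lra)); pose proof (Hcont (b n) ltac:(lra)).
  pose proof (dist_triangle X (f (a n)) (f p) (f (b n))).
  rewrite (dist_symm X (f (a n)) (f p)) in *; lra.
Qed.

Lemma limit_pseudo_orbit_cluster_chain_recurrent (x : nat -> X) (p : X) :
  limit_pseudo_orbit f x ->
  (forall r, 0 < r -> frequently (fun n => dist p (x n) < r)) ->
  chain_recurrent f p.
Proof.
  intros Hx Hp delta Hdelta.
  destruct (contf p (delta / 2)) as [eta [Heta Hcont]]; [lra|].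
  destruct (Hx (delta / 2)) as [N HN]; [lra|].
  assert (Hjump : forall n, (n >= N)%nat -> dist (f (x n)) (x (S n)) < delta / 2).
  { intros n Hn; specialize (HN n Hn); now rewrite Rabs_dist in HN. }
  set (r := Rmin eta (delta / 2)).
  assert (Hr : 0 < r) by (apply Rmin_glb_lt; lra).
  assert (r <= eta) by apply Rmin_l; assert (r <= delta / 2) by apply Rmin_r.
  destruct (Hp r Hr N) as [n1 [Hn1 Hd1]].
  destruct (Hp r Hr (n1 + 2)%nat) as [n2 [Hn2 Hd2]].
  (* the chain: p, x (n1 + 1), ..., x (n2 - 1), p *)
  exists (n2 - n1)%nat,
    (fun j => if Nat.eqb j 0 then p
              else if Nat.eqb j (n2 - n1) then p else x (n1 + j)%nat).
  split; [lia|]; split; [reflexivity|].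
  split; [now rewrite Nat.eqb_refl; destruct (Nat.eqb (n2 - n1) 0)|].
  intros i Hi; cbv beta.
  destruct (Nat.eqb_spec i 0); destruct (Nat.eqb_spec i (n2 - n1));
    destruct (Nat.eqb_spec (S i) (n2 - n1)); destruct (Nat.eqb_spec (S i) 0);
    try lia.
  - subst i; replace (n1 + 1)%nat with (S n1) by lia.
    pose proof (Hjump n1 Hn1); pose proof (Hcont (x n1) ltac:(lra)).
    pose proof (dist_triangle X (f p) (f (x n1)) (x (S n1))); lra.
  - pose proof (Hjump (n1 + i)%nat ltac:(lia)).
    replace (S (n1 + i)) with n2 in * by lia.
    pose proof (dist_triangle_r X (f (x (n1 + i)%nat)) (x n2) p); lra.
  - pose proof (Hjump (n1 + i)%nat ltac:(lia)).
    replace (n1 + S i)%nat with (S (n1 + i)) by lia; lra.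
Qed.

Lemma limit_pseudo_orbit_approaches_chain_recurrent (x : nat -> X) :
  limit_pseudo_orbit f x -> forall eps, 0 < eps -> exists N, forall n,
    (n >= N)%nat -> exists z, chain_recurrent f z /\ dist (x n) z < eps.
Proof.
  intros Hx eps Heps; apply NNPP; intros Hnot.
  assert (Hfar : frequently (fun n =>
            forall z, chain_recurrent f z -> eps <= dist (x n) z)).
  { intro M; apply NNPP; intros HM; apply Hnot; exists M; intros n Hn.
    apply NNPP; intros Hn'; apply HM; exists n; split; [exact Hn|].
    intros z Hz; apply Rnot_lt_le; intros Hlt; apply Hn'; eauto. }
  destruct (compact_frequently_cluster x _ Hfar) as [p Hp].
  assert (Hcr : chain_recurrent f p).
  { apply (limit_pseudo_orbit_cluster_chain_recurrent x p Hx).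
    intros r Hr M; destruct (Hp r Hr M) as [n [Hn [_ Hd]]]; eauto. }
  destruct (Hp eps Heps 0%nat) as [n [_ [Hfarn Hd]]].
  specialize (Hfarn p Hcr); rewrite dist_symm in Hfarn; lra.
Qed.

End Compactness.

Section Approximation.

Variables (X : MetricSpace) (A : X -> Prop).

Definition approx_at (a : X) (j : nat) : Prop :=
  exists z, A z /\ dist a z < / (INR j + 1).

Lemma inv_INR_succ_le (i j : nat) : (i <= j)%nat -> / (INR j + 1) <= / (INR i + 1).
Proof.
  intros Hij; apply Rinv_le_contravar; [pose proof (pos_INR i); lra|].
  apply le_INR in Hij; lra.
Qed.

(* The best of the precisions 1/(j+1), j <= m, is attained: this replaces an infimum of distances. *)
Lemma approx_up_to (a s0 : X) : A s0 -> forall m, exists w, A w /\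
  forall j, (j <= m)%nat -> approx_at a j -> dist a w < / (INR j + 1).
Proof.
  intros Hs0; induction m as [|m [w [Hw Hwj]]].
  - destruct (classic (approx_at a 0)) as [[z [Hz Hd]]|Hno].
    + exists z; split; [exact Hz|]; intros j Hj _.
      now replace j with 0%nat by lia.
    + exists s0; split; [exact Hs0|]; intros j Hj Hj'.
      replace j with 0%nat in Hj' by lia; contradiction.
  - destruct (classic (approx_at a (S m))) as [[z [Hz Hd]]|Hno].
    + exists z; split; [exact Hz|]; intros j Hj _.
      pose proof (inv_INR_succ_le j (S m) Hj); lra.
    + exists w; split; [exact Hw|]; intros j Hj Hj'.
      destruct (Nat.eq_dec j (S m)) as [->|Hne]; [contradiction|].
      apply Hwj; [lia|exact Hj'].
Qed.

Lemma approximating_sequence (x : nat -> X) :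
  (forall eps, 0 < eps -> exists N, forall n, (n >= N)%nat ->
     exists z, A z /\ dist (x n) z < eps) ->
  exists z : nat -> X, (forall n, A (z n)) /\
    tends_to_zero (fun n => dist (x n) (z n)).
Proof.
  intros Hnear.
  destruct (Hnear 1 Rlt_0_1) as [N0 HN0].
  destruct (HN0 N0 (le_n _)) as [s0 [Hs0 _]].
  destruct (choice (fun n w => A w /\ forall j, (j <= n)%nat ->
              approx_at (x n) j -> dist (x n) w < / (INR j + 1)))
    as [z Hz].
  { intro n; exact (approx_up_to (x n) s0 Hs0 n). }
  exists z; split; [intro n; apply Hz|].
  intros eps Heps; destruct (archimed_cor1 eps Heps) as [j [Hj Hj0]].
  assert (Hpos : 0 < / (INR j + 1)).
  { apply Rinv_0_lt_compat; pose proof (pos_INR j); lra. }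
  destruct (Hnear _ Hpos) as [Nj HNj].
  exists (Nat.max Nj j); intros n Hn; rewrite Rabs_dist.
  assert (Hd : dist (x n) (z n) < / (INR j + 1))
    by (apply Hz; [lia|apply HNj; lia]).
  assert (/ (INR j + 1) <= / INR j)
    by (apply Rinv_le_contravar; [apply lt_0_INR; lia|lra]).
  lra.
Qed.

End Approximation.

Lemma asymptotic_limit_pseudo_orbit (X : MetricSpace) (f : X -> X) (x z : nat -> X) :
  compact_space X -> continuous_map f ->
  limit_pseudo_orbit f x -> tends_to_zero (fun n => dist (x n) (z n)) ->
  limit_pseudo_orbit f z.
Proof.
  intros HC Hc Hx Hxz.
  apply tends_to_zero_dist_le with
    (u := fun n => dist (f (x n)) (f (z n)) + dist (f (x n)) (x (S n))
                   + dist (x (S n)) (z (S n))).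
  - intro n.
    pose proof (dist_triangle X (f (z n)) (f (x n)) (x (S n))).
    rewrite (dist_symm X (f (x n)) (f (z n))).
    pose proof (dist_triangle X (f (z n)) (x (S n)) (z (S n))); lra.
  - apply tends_to_zero_plus; [apply tends_to_zero_plus|].
    + now apply continuous_map_preserves_asymptotic.
    + exact Hx.
    + exact (tends_to_zero_shift _ Hxz).
Qed.

Theorem lemma3p4 (X : MetricSpace) (f : X -> X) :
  compact_space X -> continuous_map f ->
  limit_shadowing_around f (chain_recurrent f) ->
  limit_shadowing f.
Proof.
  intros HC Hc Hshadow x Hx _.
  destruct (approximating_sequence X (chain_recurrent f) x
              (limit_pseudo_orbit_approaches_chain_recurrent X HC f Hc x Hx))
    as [z [Hz Hxz]].
  destruct (Hshadow z (asymptotic_limit_pseudo_orbit X f x z HC Hc Hx Hxz) Hz)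
    as [y Hy].
  exists y.
  apply tends_to_zero_dist_le
    with (u := fun n => dist (x n) (z n) + dist (z n) (iter f n y)).
  - intro n; apply dist_triangle.
  - now apply tends_to_zero_plus.
Qed.
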